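(* Let $\mathcal{L}\subseteq\mathbb{S}^n$ be a regular linear subspace, let $\{A_1,\dots,A_c\}$ be a basis of $\mathcal{L}^\perp$, and define $$\mathcal{A}_\mathcal{L}=\{\Sigma\in\mathbb{S}^n : \mathrm{tr}(A_i\cdot\mathrm{adj}(\Sigma))=0\text{ for } i=1,\dots,c\}.$$ Then the ML degree of $\mathcal{L}$ equals the number of invertible matrices in $\mathcal{A}_\mathcal{L}\cap(\mathcal{L}^\perp+S)$ for generic $S\in\mathbb{S}^n$.
   Context: $\mathbb{S}^n$ denotes the space of complex symmetric $n\times n$ matrices; $\mathrm{adj}$ denotes the adjugate matrix. A linear subspace $\mathcal{L}$ is regular if it contains a full-rank matrix. $\mathcal{L}^\perp=\{\Sigma:\mathrm{tr}(K\Sigma)=0\ \forall K\in\mathcal{L}\}$. The reciprocal variety $\mathcal{L}^{-1}$ is the Zariski closure of the set of inverses of invertible matrices in $\mathcal{L}$. The ML degree of $\mathcal{L}$ is the number of matrices in $\mathcal{L}^{-1}\cap(\mathcal{L}^\perp+S)$ for generic $S\in\mathbb{S}^n$. *)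

From HB Require Import structures.
From mathcomp Require Import all_boot all_order all_algebra.
From mathcomp Require Import reals.
From mathcomp Require Import complex.
From mathcomp Require Import mpoly.
Set Implicit Arguments. Unset Strict Implicit. Unset Printing Implicit Defensive.
Import Order.TTheory GRing.Theory Num.Theory.
Local Open Scope ring_scope.

Notation CC R := (complex R).

Section Defs.
Variables (R : realType) (n : nat).
Local Notation C := (CC R).
Local Notation M := 'M[C]_n.

Definition is_symmx (A : M) : Prop := A^T = A.

Definition mpeval (p : {mpoly C[n * n]}) (A : M) : C :=
  p.@[fun i => mxvec A 0 i].

Definition zariski_closure (X : M -> Prop) : M -> Prop :=
  fun A => forall p : {mpoly C[n * n]},
    (forall B, X B -> mpeval p B = 0) -> mpeval p A = 0.

Definition regular (L : {vspace M}) : Prop :=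
  exists K, K \in L /\ K \in unitmx.

Definition Lperp (L : {vspace M}) (S : M) : Prop :=
  is_symmx S /\ forall K, K \in L -> \tr (K *m S) = 0.

Definition reciprocal (L : {vspace M}) : M -> Prop :=
  zariski_closure (fun A => exists K, [/\ K \in L, K \in unitmx & A = invmx K]).

Definition has_card (P : M -> Prop) (d : nat) : Prop :=
  exists s : seq M, [/\ uniq s, size s = d & forall x, x \in s <-> P x].

(* "for generic S in S^n, Q S holds": Q holds on a nonempty Zariski-open
   subset of S^n, i.e. on a basic open set {f <> 0} with f not identically
   zero on S^n *)
Definition generically (Q : M -> Prop) : Prop :=
  exists f : {mpoly C[n * n]},
    (exists S0, is_symmx S0 /\ mpeval f S0 != 0) /\
    forall S, is_symmx S -> mpeval f S != 0 -> Q S.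

Definition generic_count (F : M -> M -> Prop) (d : nat) : Prop :=
  generically (fun S => has_card (F S) d).

Definition ML_degree_is (L : {vspace M}) (d : nat) : Prop :=
  generic_count (fun S Sig => reciprocal L Sig /\ Lperp L (Sig - S)) d.

Definition A_L (c : nat) (A : c.-tuple M) (Sig : M) : Prop :=
  is_symmx Sig /\ forall i : 'I_c, \tr (tnth A i *m \adj Sig) = 0.

End Defs.

(* Let b_1, ..., b_m be a basis of L and pi(S) := (tr (b_j S))_j, so that L^perp + S is the
   fibre of pi through S.  For invertible Sig, membership in L^{-1} and in A_L agree: the
   identities Sig^T = Sig and tr (A_i adj Sig) = 0 hold on inverses of elements of L, hence
   on L^{-1}; conversely an invertible symmetric Sig in A_L has Sig^{-1} = adj Sig / det Sig
   in (L^perp)^perp = L.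
   It remains to exclude, for generic S, singular points of L^{-1} in L^perp + S.  In the
   coordinates of K in L, the m + 1 polynomials det K and tr (b_j adj K) are algebraically
   dependent (more monomials in them than monomials of bounded degree in m variables), and
   tr (b_j adj K) = det K * tr (b_j K^{-1}); a homogenised dependence thus becomes a nonzero
   relation P (pi Sig, det Sig) = 0 on L^{-1}.  Dividing by the largest possible power of
   det Sig, h := P (_, 0) is a nonzero polynomial vanishing at pi Sig for every singular Sig in
   L^{-1}, and S |-> h (pi S) is the required generic condition, since pi Sig = pi S on
   L^perp + S. *)

From HB Require Import structures.
From mathcomp Require Import all_boot all_order all_algebra.
From mathcomp Require Import reals complex mpoly.
From mathcomp Require Import zify perm.
Set Implicit Arguments. Unset Strict Implicit. Unset Printing Implicit Defensive.
Import Order.TTheory GRing.Theory Num.Theory.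
Local Open Scope ring_scope.

Lemma eq_rmorph_mpoly (R : comNzRingType) (S : nzRingType) k
    (f g : {rmorphism {mpoly R[k]} -> S}) :
  (forall c, f c%:MP = g c%:MP) -> (forall i, f 'X_i = g 'X_i) -> f =1 g.
Proof.
move=> hc hX p; rewrite (mpolyE p) !rmorph_sum; apply: eq_bigr => mu _.
rewrite -mul_mpolyC !rmorphM hc mpolyXE_id !rmorph_prod; congr (_ * _).
by apply: eq_bigr => i _; rewrite !rmorphXn hX.
Qed.

Section MpolyNonroot.
Variable F : numDomainType.

Lemma poly_nonroot (q : {poly F}) : q != 0 -> exists z, q.[z] != 0.
Proof.
move=> q0; set s := [seq i%:R | i <- iota 0 (size q)] : seq F.
have us : uniq s.
  by rewrite map_inj_uniq ?iota_uniq // => a b /eqP; rewrite eqr_nat => /eqP.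
have [hall|/allPn [z _ hz]] := boolP (all (root q) s); last by exists z.
by have := max_poly_roots q0 hall us; rewrite size_map size_iota ltnn.
Qed.

Definition extend_last k (x : 'I_k -> F) (z : F) (i : 'I_k.+1) : F :=
  if unlift ord_max i is Some j then x j else z.

Lemma widen_ord_max_lift k (j : 'I_k) : widen_ord (leqnSn k) j = lift ord_max j.
Proof. by apply: val_inj; rewrite /= /bump leqNgt ltn_ord. Qed.

Lemma muni_eval k (p : {mpoly F[k.+1]}) x z :
  (map_poly (meval x) (muni p)).[z] = p.@[extend_last x z].
Proof.
apply: (@eq_rmorph_mpoly _ _ _
  (horner_eval z \o map_poly (meval x) \o @muni k F) (meval (extend_last x z))).
  by move=> c /=; rewrite horner_evalE muniC map_polyC hornerC /= !mevalC.
move=> i /=; rewrite horner_evalE muniE msuppX big_seq1 mcoeffX eqxx scale1r.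
rewrite -mul_polyC rmorphM /= map_polyC map_polyXn !hornerE /= !mevalX.
rewrite big_ord_recr /= /extend_last unlift_none; congr (_ * _).
by apply: eq_bigr => j _; rewrite mnmE widen_ord_max_lift liftK.
Qed.

Lemma muni_coef k (p : {mpoly F[k.+1]}) (mu : 'X_{1..k.+1}) :
  ((muni p)`_(mu ord_max))@_[multinom mu (widen_ord (leqnSn k) i) | i < k] = p@_mu.
Proof.
rewrite muniE coef_sum raddf_sum /=.
rewrite (eq_bigr (fun nu => p@_nu * (nu == mu)%:R)); last first.
  move=> nu _; rewrite coefZ coefXn mulr_natr mcoeffMn mcoeffZ mcoeffX.
  suff <- : ([multinom nu (widen_ord (leqnSn k) i) | i < k] ==
             [multinom mu (widen_ord (leqnSn k) i) | i < k])
            && (mu ord_max == nu ord_max) = (nu == mu).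
    by case: (_ == _); case: (_ == _); rewrite ?mulr0 ?mulr1 ?mulr0n ?mulr1n.
  apply/idP/eqP => [/andP [/eqP hw /eqP hmax]|->]; last by rewrite !eqxx.
  apply/mnmP => i; case: (unliftP ord_max i) => [j ->|->] //.
  have := congr1 (fun nu : 'X_{1..k} => nu j) hw.
  by rewrite !mnmE widen_ord_max_lift.
have [hmu|hmu] := boolP (mu \in msupp p).
  rewrite (bigD1_seq mu) ?msupp_uniq //= eqxx mulr1 big1 ?addr0 // => nu.
  by move=> /negbTE ->; rewrite mulr0.
rewrite (memN_msupp_eq0 hmu) big_seq big1 // => nu hnu.
by case: eqP => [e|_]; [move: hmu; rewrite -e hnu | rewrite mulr0].
Qed.

Lemma mpoly_nonroot k (p : {mpoly F[k]}) : p != 0 -> exists x, p.@[x] != 0.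
Proof.
elim: k p => [|k IH] p p0.
  by exists (fun _ => 0); move: p0; rewrite (nvar0_mpolyC p) mevalC mpolyC_eq0.
set mu := mlead p.
have c0 : ((muni p)`_(mu ord_max))@_[multinom mu (widen_ord (leqnSn k) i) | i < k] != 0.
  by rewrite muni_coef -mcoeff_msupp mlead_supp.
have [x hx] : exists x, ((muni p)`_(mu ord_max)).@[x] != 0.
  by apply: IH; apply: contra c0 => /eqP ->; rewrite mcoeff0.
have [z hz] : exists z, (map_poly (meval x) (muni p)).[z] != 0.
  by apply: poly_nonroot; apply: contra hx => /eqP q0; rewrite -coef_map q0 coef0.
by exists (extend_last x z); rewrite -muni_eval.
Qed.

End MpolyNonroot.

Section MpolyMatrix.
Variables (F : comNzRingType) (k : nat).
Implicit Types (p : {mpoly F[k]}).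

Lemma msize_dhomog d p : p \is d.-homog -> (msize p <= d.+1)%N.
Proof. by move=> /dhomogP hp; rewrite msizeE; apply/bigmax_leqP_seq => mu /hp <-. Qed.

Lemma dhomog_prod_ord l (d : 'I_l -> nat) (f : 'I_l -> {mpoly F[k]}) :
  (forall i, f i \is (d i).-homog) -> \prod_i f i \is (\sum_i d i)%N.-homog.
Proof.
elim: l d f => [|l IH] d f hf; first by rewrite !big_ord0 dhomog1.
by rewrite !big_ord_recr /=; apply: dhomogM => //; apply: IH.
Qed.

Lemma dhomog_det N d (A : 'M[{mpoly F[k]}]_N) :
  (forall i j, A i j \is d.-homog) -> \det A \is (N * d).-homog.
Proof.
move=> hA; apply: rpred_sum => s _.
have hprod : \prod_i A i (s i) \is (N * d).-homog.
  by rewrite -[N in (N * d)%N]card_ord -sum_nat_const; apply: dhomog_prod_ord.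
by case: (odd_perm s); rewrite ?expr0 ?expr1 ?mul1r ?mulN1r ?rpredN.
Qed.

Lemma dhomog_adj N d (A : 'M[{mpoly F[k]}]_N) :
  (forall i j, A i j \is d.-homog) -> forall i j, \adj A i j \is (N.-1 * d).-homog.
Proof.
move=> hA i j; rewrite mxE.
have hminor : \det (row' j (col' i A)) \is (N.-1 * d).-homog.
  by apply: dhomog_det => a b; rewrite !mxE.
by rewrite /cofactor -signr_odd; case: (odd _); rewrite ?expr0 ?expr1 ?mul1r ?mulN1r ?rpredN.
Qed.

Lemma dhomog_trace_mul N d (B : 'M[F]_N) (A : 'M[{mpoly F[k]}]_N) :
  (forall i j, A i j \is d.-homog) -> \tr (map_mx (@mpolyC k F) B *m A) \is d.-homog.
Proof.
move=> hA; apply: rpred_sum => i _; rewrite mxE; apply: rpred_sum => l _.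
by rewrite mxE mul_mpolyC dhomogZ.
Qed.

Lemma meval_trace_mul N v (B : 'M[F]_N) (A : 'M[{mpoly F[k]}]_N) :
  (\tr (map_mx (@mpolyC k F) B *m A)).@[v] = \tr (B *m map_mx (meval v) A).
Proof.
rewrite -trace_map_mx map_mxM; congr (\tr (_ *m _)).
by apply/matrixP => i j; rewrite !mxE /= mevalC.
Qed.
End MpolyMatrix.

Lemma ltn_exponent_count m n E : E = ((m.+1 * n).+1 ^ m)%N ->
  ((m.+1 * E * n).+1 ^ m < E.+1 ^ m * E.+1)%N.
Proof.
move=> hE; set c := (m.+1 * n).+1.
have leq_exp a b e : (a <= b -> a ^ e <= b ^ e)%N.
  by move=> hab; elim: e => // e IH; rewrite !expnS leq_mul.
have E_gt0 : (0 < E)%N by rewrite hE expn_gt0.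
have hbase : ((m.+1 * E * n).+1 <= c * E)%N by rewrite /c; nia.
apply: (leq_ltn_trans (leq_exp _ _ m hbase)); rewrite expnMn -hE mulnC.
apply: leq_ltn_trans (leq_mul (leq_exp _ _ m (leqnSn E)) (leqnn E)) _.
by rewrite ltn_pmul2l ?expn_gt0.
Qed.

Lemma leq_exponent_degree m n E (a : 'I_m -> nat) k :
  (forall j, a j <= E)%N ->
  (\sum_j (n.-1 * a j + n * (E - a j)) + n * (E - k) < (m.+1 * E * n).+1)%N.
Proof.
move=> hE; have hsum : (\sum_j (n.-1 * a j + n * (E - a j)) <= \sum_(j < m) E * n)%N.
  by apply: leq_sum => j _; have := hE j; nia.
rewrite sum_nat_const card_ord in hsum.
have hlast : (n * (E - k) <= E * n)%N by nia.
by rewrite ltnS; apply: leq_trans (leq_add hsum hlast) _; nia.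
Qed.

Lemma mpoly_lin_dependent (F : fieldType) k T (I : finType) (p : I -> {mpoly F[k]}) :
  (forall i, msize (p i) <= T.+1)%N -> (T.+1 ^ k < #|I|)%N ->
  exists2 w : I -> F, (exists i, w i != 0) & \sum_i w i *: p i = 0.
Proof.
move=> hp hI; pose mnm (s : {ffun 'I_k -> 'I_T.+1}) := [multinom (s j : nat) | j < k].
pose Mt := \matrix_(r < #|I|, s < #|{ffun 'I_k -> 'I_T.+1}|)
  (p (enum_val r))@_(mnm (enum_val s)).
set u := nz_row (kermx Mt).
have u_neq0 : u != 0.
  rewrite nz_row_eq0 kermx_eq0 /row_free; apply: contraTneq hI => <-.
  have card_box : #|{ffun 'I_k -> 'I_T.+1}| = (T.+1 ^ k)%N by rewrite card_ffun !card_ord.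
  by rewrite -leqNgt -card_box rank_leq_col.
have uMt : u *m Mt = 0 by apply/sub_kermxP/nz_row_sub.
exists (fun i => u 0 (enum_rank i)).
  have [r hr] : exists r, u 0 r != 0.
    apply/existsP; apply: contraTT u_neq0 => /existsPn hu; rewrite negbK.
    by apply/eqP/rowP => r; rewrite mxE; apply/eqP/negbNE/hu.
  by exists (enum_val r); rewrite enum_valK.
apply/mpolyP => mu; rewrite mcoeff0 raddf_sum /=; under eq_bigr do rewrite mcoeffZ.
have [box|/forallPn [j]] := boolP [forall j, mu j <= T]%N; last first.
  rewrite -ltnNge => hj; apply: big1 => i _; rewrite memN_msupp_eq0 ?mulr0 //.
  apply: msize_mdeg_ge; apply: leq_trans (hp i) _.
  by apply: leq_trans hj _; rewrite mdegE (bigD1 j) //= leq_addr.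
pose s : {ffun 'I_k -> 'I_T.+1} := [ffun j => inord (mu j)].
have mnm_s : mnm s = mu.
  by apply/mnmP => j; rewrite mnmE ffunE inordK // ltnS (forallP box j).
transitivity ((u *m Mt) 0 (enum_rank s)); last by rewrite uMt mxE.
rewrite mxE (reindex _ (onW_bij _ (enum_val_bij I))).
by apply: eq_bigr => r _; rewrite enum_valK mxE enum_rankK mnm_s.
Qed.

Lemma sub_orthogonal_complement (F : fieldType) r N (B : 'M[F]_(r, N)) (v : 'rV_N) :
  (forall w : 'rV_N, w *m B^T = 0 -> w *m v^T = 0) -> (v <= B)%MS.
Proof.
move=> hv; set W := kermx B^T.
have sBW : (B <= kermx W^T)%MS.
  by apply/sub_kermxP; rewrite -[B]trmxK -trmx_mul mulmx_ker trmx0.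
have svW : (v <= kermx W^T)%MS.
  apply/sub_kermxP; rewrite -[v]trmxK -trmx_mul; apply/eqP; rewrite trmx_eq0.
  apply/eqP/row_matrixP => i; rewrite row0 row_mul; apply: hv.
  by rewrite -row_mul mulmx_ker row0.
have rkW : \rank (kermx W^T) = \rank B.
  by rewrite mxrank_ker mxrank_tr mxrank_ker mxrank_tr subKn // rank_leq_col.
by apply: submx_trans svW _; rewrite -(mxrank_leqif_sup sBW).2 rkW.
Qed.

Lemma mxtrace_mul_tr_mxvec (F : comNzRingType) N (P Q : 'M[F]_N) :
  \tr (P *m Q^T) = (mxvec P *m (mxvec Q)^T) 0 0.
Proof.
rewrite [RHS]mxE (reindex _ (curry_mxvec_bij _ _)) /=.
transitivity (\sum_i \sum_k P i k * Q i k).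
  by apply: eq_bigr => i _; rewrite mxE; apply: eq_bigr => k _; rewrite !mxE.
by rewrite pair_bigA; apply: eq_bigr => -[i k] _; rewrite /= !mxE !mxvecE.
Qed.

Lemma adj_unitmx (F : comUnitRingType) N (B : 'M[F]_N) :
  B \in unitmx -> \adj B = \det B *: invmx B.
Proof. by move=> uB; rewrite /invmx uB scalerA mulrV ?scale1r // -unitmxE. Qed.

Section Genericity.
Variables (R : realType) (n : nat).
Local Notation C := (CC R).
Local Notation M := 'M[C]_n.

Lemma mpevalM (f g : {mpoly C[n * n]}) S : mpeval (f * g) S = mpeval f S * mpeval g S.
Proof. exact: mevalM. Qed.

Lemma mpeval_line (f : {mpoly C[n * n]}) (S D : M) :
  exists q : {mpoly C[1]}, forall x, q.@[x] = mpeval f (S + x ord0 *: D).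
Proof.
exists (f \mPo [tuple (mxvec S 0 l)%:MP + mxvec D 0 l *: 'X_ord0 | l < n * n]) => x.
rewrite comp_mpoly_meval /mpeval; apply: meval_eq => l.
by rewrite tnth_mktuple mevalD mevalC mevalZ mevalXU linearD linearZ !mxE mulrC.
Qed.

Lemma generically_and (P Q : M -> Prop) :
  generically P -> generically Q -> generically (fun S => P S /\ Q S).
Proof.
move=> [f [[S1 [sS1 fS1]] hf]] [g [[S2 [sS2 gS2]] hg]].
exists (f * g); split; last first.
  by move=> S sS; rewrite mpevalM mulf_eq0 negb_or => /andP [fS gS]; split; auto.
have [q1 hq1] := mpeval_line f S2 (S1 - S2).
have [q2 hq2] := mpeval_line g S2 (S1 - S2).
have q1_neq0 : q1 != 0.
  apply: contraNneq fS1 => q10; have := hq1 (fun _ => 1).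
  by rewrite q10 meval0 scale1r addrC subrK => <-.
have q2_neq0 : q2 != 0.
  apply: contraNneq gS2 => q20; have := hq2 (fun _ => 0).
  by rewrite q20 meval0 scale0r addr0 => <-.
have [x hx] := mpoly_nonroot (mulf_neq0 q1_neq0 q2_neq0).
exists (S2 + x ord0 *: (S1 - S2)); split.
  by rewrite /is_symmx linearD linearZ linearB /= sS1 sS2.
by rewrite mpevalM -hq1 -hq2 -mevalM.
Qed.

Lemma generically_impl (P Q : M -> Prop) :
  (forall S, is_symmx S -> P S -> Q S) -> generically P -> generically Q.
Proof. by move=> hPQ [f [hf0 hf]]; exists f; split=> // S sS /(hf S sS); apply: hPQ. Qed.

Lemma eq_has_card (P Q : M -> Prop) d :
  (forall x, P x <-> Q x) -> has_card P d -> has_card Q d.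
Proof. by move=> hPQ [s [us sz hs]]; exists s; split=> // x; rewrite hs. Qed.

Lemma mxtrace_symmx_mul_tr (K Y : M) : is_symmx K -> \tr (K *m Y^T) = \tr (K *m Y).
Proof. by move=> sK; rewrite -mxtrace_tr trmx_mul trmxK sK mxtrace_mulC. Qed.

Lemma mxtrace_symmx_mul_symmetrize (K Y : M) :
  is_symmx K -> \tr (K *m (Y + Y^T)) = \tr (K *m Y) *+ 2.
Proof. by move=> sK; rewrite mulmxDr mxtraceD mxtrace_symmx_mul_tr // mulr2n. Qed.

Lemma symmx_symmetrize (Y : M) : is_symmx (Y + Y^T).
Proof. by rewrite /is_symmx linearD /= trmxK addrC. Qed.

End Genericity.

Section GenericMatrix.
Variables (R : realType) (n : nat).
Local Notation C := (CC R).

Definition Xmx : 'M[{mpoly C[n * n]}]_n := \matrix_(i, k) 'X_(mxvec_index i k).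

Lemma map_mpeval_Xmx Sig : map_mx (meval (fun l => mxvec Sig 0 l)) Xmx = Sig.
Proof. by apply/matrixP => i k; rewrite !mxE mevalXU mxvecE. Qed.

Lemma mpeval_det Sig : mpeval (\det Xmx) Sig = \det Sig.
Proof. by rewrite /mpeval -det_map_mx map_mpeval_Xmx. Qed.

Lemma mpeval_trace_mul_adj B Sig :
  mpeval (\tr (map_mx (@mpolyC _ C) B *m \adj Xmx)) Sig = \tr (B *m \adj Sig).
Proof. by rewrite /mpeval meval_trace_mul map_mx_adj map_mpeval_Xmx. Qed.

End GenericMatrix.

Arguments Xmx {R n}.

Section Subspace.
Variables (R : realType) (n : nat).
Local Notation C := (CC R).
Local Notation M := 'M[C]_n.
Variable L : {vspace M}.
Hypothesis L_sym : forall K, K \in L -> is_symmx K.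
Local Notation m := (\dim L).

Definition basisL (j : 'I_m) : M := (vbasis L)`_j.

Definition trL (S : M) (j : 'I_m) : C := \tr (basisL j *m S).

Lemma basisL_mem j : basisL j \in L.
Proof. by apply: vbasis_mem; rewrite mem_nth // size_tuple. Qed.

Lemma trL_eq0_perp Y : (forall j, trL Y j = 0) -> forall K, K \in L -> \tr (K *m Y) = 0.
Proof.
move=> hY K /coord_vbasis ->; rewrite mulmx_suml raddf_sum big1 //= => j _.
by rewrite -scalemxAl mxtraceZ [\tr _]hY mulr0.
Qed.

Definition Lmx : 'M[C]_(m, n * n) := \matrix_j mxvec (basisL j).

Lemma row_free_Lmx : row_free Lmx.
Proof.
rewrite -kermx_eq0; apply/eqP/row_matrixP => r; rewrite row0.
set u := row r (kermx Lmx).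
have hu : \sum_j u 0 j *: basisL j = 0.
  apply: (can_inj mxvecK); rewrite linear_sum linear0 /=.
  rewrite -[RHS](_ : u *m Lmx = 0); last by rewrite -row_mul mulmx_ker row0.
  by rewrite mulmx_sum_row; apply: eq_bigr => j _; rewrite rowK linearZ.
by apply/rowP => j; rewrite [RHS]mxE; apply: (freeP (basis_free (vbasisP L)) _ hu).
Qed.

Lemma mxvec_sub_Lmx X : (mxvec X <= Lmx)%MS -> X \in L.
Proof.
move=> /submxP [D hD]; rewrite -[X]mxvecK hD mulmx_sum_row linear_sum /=.
by apply: rpred_sum => j _; rewrite rowK linearZ /= mxvecK; apply/rpredZ/basisL_mem.
Qed.

Lemma mulmx_Lmx_tr (w : 'rV_(n * n)) j : (w *m Lmx^T) 0 j = trL (vec_mx w) j.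
Proof.
rewrite /trL mxtrace_mulC -(L_sym (basisL_mem j)).
by rewrite mxtrace_mul_tr_mxvec vec_mxK !mxE; apply: eq_bigr => l _; rewrite !mxE.
Qed.

Lemma trL_surj (y : 'I_m -> C) : exists2 S, is_symmx S & forall j, trL S j = y j.
Proof.
have /row_freeP [Bi hBi] := row_free_Lmx.
set X := vec_mx (Bi *m (\row_j y j)^T)^T.
have hX j : trL X j = y j.
  by rewrite -mulmx_Lmx_tr -trmx_mul mulmxA hBi mul1mx trmxK mxE.
exists (2%:R^-1 *: (X + X^T)); first by rewrite /is_symmx linearZ /= symmx_symmetrize.
move=> j; rewrite /trL -scalemxAr mxtraceZ mxtrace_symmx_mul_symmetrize; last first.
  exact/L_sym/basisL_mem.
by rewrite -/(trL _ _) hX -[y j *+ 2]mulr_natl mulrA mulVf ?mul1r // pnatr_eq0.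
Qed.

Lemma reciprocal_vanish (p : {mpoly C[n * n]}) Sig :
  (forall K, K \in L -> K \in unitmx -> mpeval p (invmx K) = 0) ->
  reciprocal L Sig -> mpeval p Sig = 0.
Proof. by move=> hp hSig; apply: hSig => _ [K [hK uK ->]]; apply: hp. Qed.

Lemma reciprocal_symmx Sig : reciprocal L Sig -> is_symmx Sig.
Proof.
move=> hSig; apply/matrixP => i k; apply/eqP; rewrite mxE -subr_eq0; apply/eqP.
have hval S : mpeval (Xmx k i - Xmx i k) S = S k i - S i k.
  by rewrite /mpeval mevalB !mxE !mevalXU !mxvecE.
rewrite -hval; apply: reciprocal_vanish hSig => K hK uK.
by rewrite hval -{1}(L_sym hK) -trmx_inv mxE subrr.
Qed.

Definition Kmx : 'M[{mpoly C[m]}]_n := \matrix_(i, l) \sum_j basisL j i l *: 'X_j.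

Lemma Kmx_homog i l : Kmx i l \is 1.-homog.
Proof.
by rewrite mxE; apply: rpred_sum => j _; apply: dhomogZ; rewrite dhomogX; apply/eqP/mdeg1.
Qed.

Lemma map_meval_Kmx x : map_mx (meval x) Kmx = \sum_j x j *: basisL j.
Proof.
apply/matrixP => i l; rewrite !mxE summxE raddf_sum; apply: eq_bigr => j _.
by rewrite !mxE /= mevalZ mevalXU mulrC.
Qed.

(* E is large enough that there are more exponent pairs e than monomials of degree at most
   (m + 1) E n in m variables (ltn_exponent_count), so the relpoly e are linearly dependent. *)
Local Notation E := ((m.+1 * n).+1 ^ m)%N.

Definition exponents := ({ffun 'I_m -> 'I_E.+1} * 'I_E.+1)%type.

Definition trKmx j : {mpoly C[m]} := \tr (map_mx (@mpolyC _ C) (basisL j) *m \adj Kmx).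

(* The padding exponents E - _ make det K occur with the same power (m + 1) E in every
   relpoly e evaluated at K (meval_relpoly). *)
Definition relpoly (e : exponents) : {mpoly C[m]} :=
  \prod_j (trKmx j ^+ e.1 j * \det Kmx ^+ (E - e.1 j)) * \det Kmx ^+ (E - e.2).

Lemma msize_relpoly e : (msize (relpoly e) <= (m.+1 * E * n).+1)%N.
Proof.
have hdet : \det Kmx \is (n * 1).-homog by apply/dhomog_det/Kmx_homog.
have htr j : trKmx j \is (n.-1 * 1).-homog.
  by apply/dhomog_trace_mul/dhomog_adj/Kmx_homog.
apply: leq_trans (msize_dhomog _) _.
  apply: dhomogM (dhomogMn _ hdet); apply: dhomog_prod_ord => j.
  exact: dhomogM (dhomogMn _ (htr j)) (dhomogMn _ hdet).
rewrite !muln1; apply: leq_exponent_degree => j.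
by rewrite -ltnS ltn_ord.
Qed.

Lemma meval_relpoly e K : K \in L -> K \in unitmx ->
  (relpoly e).@[fun j => coord (vbasis L) j K] =
  \det K ^+ (m.+1 * E) * (\prod_j trL (invmx K) j ^+ e.1 j * \det (invmx K) ^+ e.2).
Proof.
move=> hK uK; set x := fun j => _.
have hKx : map_mx (meval x) Kmx = K by rewrite map_meval_Kmx -coord_vbasis.
have dK_neq0 : \det K != 0 by rewrite -unitfE -unitmxE.
have htr j : (trKmx j).@[x] = \det K * trL (invmx K) j.
  by rewrite meval_trace_mul map_mx_adj hKx adj_unitmx // -scalemxAr mxtraceZ.
have hdet : (\det Kmx).@[x] = \det K by rewrite -det_map_mx hKx.
have hfactor j : (trKmx j ^+ e.1 j * \det Kmx ^+ (E - e.1 j)).@[x] =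
                 \det K ^+ E * trL (invmx K) j ^+ e.1 j.
  have hej : (e.1 j <= E)%N by rewrite -ltnS.
  by rewrite rmorphM !rmorphXn /= htr hdet exprMn mulrAC -exprD subnKC.
have hlast : (\det Kmx ^+ (E - e.2)).@[x] = \det K ^+ E * \det (invmx K) ^+ e.2.
  have pow_sub a b : (a <= b)%N -> \det K ^+ (b - a) = \det K ^+ b * (\det K)^-1 ^+ a.
    move=> hab; rewrite exprVn -[in RHS](subnK hab) exprD mulfK //.
    exact: expf_neq0.
  by rewrite rmorphXn /= hdet det_inv pow_sub // -ltnS.
rewrite /relpoly rmorphM rmorph_prod /= (eq_bigr _ (fun j _ => hfactor j)).
by rewrite hlast big_split /= prodr_const card_ord mulrACA -exprSr -exprM [(_ * m.+1)%N]mulnC.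
Qed.

Lemma reciprocal_relation : exists2 w : exponents -> C, (exists e, w e != 0) &
  forall K, K \in L -> K \in unitmx ->
    \sum_e w e * (\prod_j trL (invmx K) j ^+ e.1 j * \det (invmx K) ^+ e.2) = 0.
Proof.
have [|w w_neq0 hw] := @mpoly_lin_dependent _ _ (m.+1 * E * n) _ relpoly msize_relpoly.
  by rewrite card_prod card_ffun !card_ord; apply: ltn_exponent_count.
exists w => // K hK uK; have dK_neq0 : \det K != 0 by rewrite -unitfE -unitmxE.
have := congr1 (meval (fun j => coord (vbasis L) j K)) hw.
rewrite rmorph0 rmorph_sum /=; under eq_bigr do rewrite mevalZ meval_relpoly // mulrCA.
by rewrite -mulr_sumr => /eqP; rewrite mulf_eq0 expf_eq0 (negbTE dK_neq0) andbF => /eqP.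
Qed.

Definition trXmx j : {mpoly C[n * n]} := \tr (map_mx (@mpolyC _ C) (basisL j) *m Xmx).

Lemma mpeval_trXmx j Sig : mpeval (trXmx j) Sig = trL Sig j.
Proof. by rewrite /mpeval meval_trace_mul map_mpeval_Xmx. Qed.

Lemma reciprocal_relation_reduced : exists (w : exponents -> C) e0,
  [/\ w e0 != 0, forall e, w e != 0 -> (e0.2 <= e.2)%N &
      forall Sig, reciprocal L Sig ->
        \sum_e w e * (\prod_j trL Sig j ^+ e.1 j * \det Sig ^+ (e.2 - e0.2)) = 0].
Proof.
have [w [e1 we1] hw] := reciprocal_relation.
have [e0 we0 hmin] := @arg_minnP _ e1 (fun e => w e != 0) (fun e => e.2 : nat) we1.
exists w, e0; split=> // Sig.
pose G := \sum_e w e *: (\prod_j trXmx j ^+ e.1 j * \det Xmx ^+ (e.2 - e0.2)).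
have hG S : mpeval G S =
    \sum_e w e * (\prod_j trL S j ^+ e.1 j * \det S ^+ (e.2 - e0.2)).
  rewrite -mpeval_det; under [RHS]eq_bigr do under eq_bigr do rewrite -mpeval_trXmx.
  rewrite /mpeval rmorph_sum; apply: eq_bigr => e _.
  by rewrite /= mevalZ rmorphM rmorph_prod; under eq_bigr do rewrite rmorphXn; rewrite rmorphXn.
rewrite -hG; apply: reciprocal_vanish => K hK uK.
have dKi_neq0 : \det (invmx K) != 0 by rewrite -unitfE -unitmxE unitmx_inv.
apply: (mulIf (expf_neq0 e0.2 dKi_neq0)); rewrite mul0r -(hw K hK uK) hG mulr_suml.
apply: eq_bigr => e _.
have [->|/hmin he] := eqVneq (w e) 0; first by rewrite !mul0r.
by rewrite -!mulrA -exprD subnK.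
Qed.

Definition exponent_mnm (a : {ffun 'I_m -> 'I_E.+1}) : 'X_{1..m} :=
  [multinom (a j : nat) | j < m].

Lemma exponent_mnm_inj : injective exponent_mnm.
Proof.
move=> a b /mnmP hab; apply/ffunP => j; apply: val_inj.
by have := hab j; rewrite !mnmE.
Qed.

Lemma singular_reciprocal : exists2 h : {mpoly C[m]}, h != 0 &
  forall Sig, reciprocal L Sig -> \det Sig = 0 -> h.@[trL Sig] = 0.
Proof.
have [w [e0 [we0 hmin hrel]]] := reciprocal_relation_reduced.
exists (\sum_e (w e * (e.2 <= e0.2)%N%:R) *: 'X_[exponent_mnm e.1]).
  apply: contraNneq we0 => /(congr1 (mcoeff (exponent_mnm e0.1))).
  rewrite mcoeff0 raddf_sum (bigD1 e0) //= big1 ?addr0 => [|e he].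
    by rewrite mcoeffZ mcoeffX eqxx leqnn !mulr1 => ->.
  rewrite mcoeffZ mcoeffX; have [->|/hmin le02] := eqVneq (w e) 0; first by rewrite !mul0r.
  have [/exponent_mnm_inj e1E|] := eqVneq (exponent_mnm e.1) (exponent_mnm e0.1); last first.
    by rewrite mulr0.
  case: leqP => [ge02|]; last by rewrite mulr0 mul0r.
  have e2E : e.2 = e0.2 by apply/val_inj/eqP; rewrite eqn_leq ge02 le02.
  by move: he; rewrite [e]surjective_pairing e1E e2E -surjective_pairing eqxx.
move=> Sig hSig dSig; rewrite -(hrel Sig hSig) rmorph_sum; apply: eq_bigr => e _.
rewrite /= mevalZ mevalX dSig expr0n subn_eq0 -mulrA; congr (_ * _); rewrite mulrC; congr (_ * _).
by apply: eq_bigr => j _; rewrite mnmE.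
Qed.

Lemma generic_reciprocal_unitmx : generically (fun S =>
  forall Sig, reciprocal L Sig -> Lperp L (Sig - S) -> Sig \in unitmx).
Proof.
have [h h_neq0 hsing] := singular_reciprocal.
pose g := h \mPo [tuple trXmx j | j < m].
have hg S : mpeval g S = h.@[trL S].
  rewrite /mpeval comp_mpoly_meval; apply: meval_eq => j.
  by rewrite tnth_mktuple; apply: mpeval_trXmx.
exists g; split.
  have [y hy] := mpoly_nonroot h_neq0.
  have [S0 sS0 hS0] := trL_surj y.
  by exists S0; split; rewrite // hg (meval_eq _ hS0).
move=> S _ gS Sig hSig [_ hperp]; apply: contraNT gS => uSig.
have trL_eq : trL Sig =1 trL S.
  by move=> j; apply/eqP; rewrite -subr_eq0 /trL -linearB -mulmxBr /= hperp ?basisL_mem.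
rewrite hg -(meval_eq _ trL_eq) hsing //.
by apply/eqP; move: uSig; rewrite unitmxE unitfE negbK.
Qed.

Variables (c : nat) (A : c.-tuple M).
Hypothesis A_span : forall Sig, Sig \in <<A>>%VS <-> Lperp L Sig.

Lemma symmx_perp_perp X :
  is_symmx X -> (forall i, \tr (tnth A i *m X) = 0) -> X \in L.
Proof.
move=> sX hA; apply: mxvec_sub_Lmx; apply: sub_orthogonal_complement => w hw.
set B := vec_mx w.
have hB : forall K, K \in L -> \tr (K *m B) = 0.
  by apply: trL_eq0_perp => j; rewrite -mulmx_Lmx_tr hw mxE.
have hBs : Lperp L (B + B^T).
  split=> [|K hK]; first exact: symmx_symmetrize.
  rewrite mxtrace_symmx_mul_symmetrize; last exact: L_sym.
  by rewrite hB ?mul0rn.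
have : \tr (X *m (B + B^T)) = 0.
  rewrite (coord_span (proj2 (A_span _) hBs)) mulmx_sumr raddf_sum big1 //= => i _.
  by rewrite -scalemxAr mxtraceZ mxtrace_mulC -(tnth_nth 0) hA mulr0.
rewrite mxtrace_symmx_mul_symmetrize // => /eqP; rewrite mulrn_eq0 /= => /eqP hXB.
apply/matrixP => i k; rewrite !ord1 [RHS]mxE -[w]vec_mxK -mxtrace_mul_tr_mxvec -/B.
by rewrite sX mxtrace_mulC.
Qed.

Lemma reciprocal_A_L Sig : reciprocal L Sig -> A_L A Sig.
Proof.
move=> hSig; split=> [|i]; first exact: reciprocal_symmx.
rewrite -mpeval_trace_mul_adj; apply: reciprocal_vanish hSig => K hK uK.
rewrite mpeval_trace_mul_adj adj_unitmx ?unitmx_inv // invmxK -scalemxAr mxtraceZ.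
have /A_span [_ hAi] : tnth A i \in <<A>>%VS by apply/memv_span/mem_tnth.
by rewrite mxtrace_mulC hAi ?mulr0.
Qed.

Lemma unitmx_A_L_reciprocal Sig : Sig \in unitmx -> A_L A Sig -> reciprocal L Sig.
Proof.
move=> uSig [sSig hA] p hp; rewrite -[Sig]invmxK; apply: hp.
exists (invmx Sig); split=> //; last by rewrite unitmx_inv.
apply: symmx_perp_perp; first by rewrite /is_symmx trmx_inv sSig.
by move=> i; rewrite /invmx uSig -scalemxAr mxtraceZ hA mulr0.
Qed.

Lemma reciprocal_perp_iff S :
  (forall Sig, reciprocal L Sig -> Lperp L (Sig - S) -> Sig \in unitmx) ->
  forall Sig, reciprocal L Sig /\ Lperp L (Sig - S) <->
              [/\ Sig \in unitmx, A_L A Sig & Lperp L (Sig - S)].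
Proof.
move=> hunit Sig; split=> [[hSig hperp]|[uSig hSig hperp]].
  by split=> //; [apply: hunit | apply: reciprocal_A_L].
by split=> //; apply: unitmx_A_L_reciprocal.
Qed.

End Subspace.

Unset Implicit Arguments.

Theorem proposition2p7 (R : realType) (n : nat) (L : {vspace 'M[CC R]_n})
  (hLsym : forall K, K \in L -> is_symmx K)
  (hreg : regular L)
  (c : nat) (A : c.-tuple 'M[CC R]_n)
  (hfree : free A)
  (hspan : forall Sig, Sig \in <<A>>%VS <-> Lperp L Sig) :
  forall d : nat,
    ML_degree_is L d <->
    generic_count
      (fun S Sig => [/\ Sig \in unitmx, A_L A Sig & Lperp L (Sig - S)]) d.
Proof.
move=> d; have hunit := generic_reciprocal_unitmx hLsym.
have equiv := reciprocal_perp_iff hLsym hspan.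
split=> hcount; apply: generically_impl (generically_and hcount hunit) => S _ [hS /equiv hiff];
  apply: eq_has_card hS => Sig; [exact: hiff | exact: iff_sym (hiff Sig)].
Qed.
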